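(* Let $a$ be an element of a ring $K$ such that $l_0a^m+l_1a^{m-1}+\dots+l_{m-1}a=0$ for some positive integer $m$ and integers $l_0,\dots,l_{m-1}$ with $l_0>0$ and $\gcd(l_0,l_1,\dots,l_{m-1})=1$, and such that $d\,f(a)=0$ for some integer $d>1$ and some monic $f\in\mathbb{Z}[x]$ with $f(0)=0$. Then $\varphi(a)=0$ for some monic $\varphi\in\mathbb{Z}[x]$ with $\varphi(0)=0$ and $\deg\varphi\le m$.
   Context: Rings are associative and not necessarily unital. *)

From HB Require Import structures.
From mathcomp Require Import all_boot all_order all_algebra.
Set Implicit Arguments. Unset Strict Implicit. Unset Printing Implicit Defensive.
Import Order.TTheory GRing.Theory Num.Theory.
Local Open Scope ring_scope.

(* A (possibly non-unital) associative ring is given by an additive group K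
   (zmodType) together with a binary multiplication [mul] that is associative
   and distributes over + on both sides (axioms passed as hypotheses). *)

Definition apow (K : Type) (mul : K -> K -> K) (a : K) (i : nat) : K :=
  iter i.-1 (mul a) a.

(* Evaluation of an integer polynomial without constant term at a:
   p(a) = sum_{i >= 1} p_i a^i  (the constant coefficient is ignored; it is
   required to be 0 wherever peval0 is used). *)
Definition peval0 (K : zmodType) (mul : K -> K -> K) (p : {poly int}) (a : K) : K :=
  \sum_(1 <= i < size p) (apow mul a i *~ p`_i).

From mathcomp Require Import all_boot all_order all_algebra.
From mathcomp Require Import ring zify.
Set Implicit Arguments. Unset Strict Implicit. Unset Printing Implicit Defensive.
Import Order.TTheory GRing.Theory Num.Theory.
Local Open Scope ring_scope.

(* Write evalX p for a p(a) and B for the additive subgroup of K generated by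
   a, ..., a^n, where n = m - 1; the claim is that a^(n+1) lies in B.  The
   relation l is a polynomial L of degree at most n with a L(a) = 0 whose
   coefficients have no common prime factor, and f = X f1 with d a f1(a) = 0.
   A monic integral generator g of gcd(L, f1) over Q has degree at most n and
   N a g(a) = 0 for some integer N <> 0, so division by g gives N a^j in B for
   all j.  For a prime q, some multiple of L is congruent modulo q to a monic
   polynomial of degree at most n; dividing by it cancels the factors q of N,
   leaving s a^j in B for some s prime to q.  These s generate the unit ideal
   of Z, hence a^(n+1) = a r(a) with deg r < n, and phi = X (X^n - r). *)

Lemma int_ideal_unit (S : int -> Prop) :
    (forall x y, S x -> S y -> S (x + y)) -> (forall x z, S x -> S (x * z)) ->
    (forall q, prime q -> exists2 s, S s & ~~ (q%:Z %| s)%Z) ->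
  S 1.
Proof.
move=> SD SM Sq.
have Sgcd x y : S x -> S y -> S (gcdz x y).
  by move=> Sx Sy; have [u [v <-]] := Bezoutz x y; rewrite mulrC (mulrC v); auto.
suff S1 n : (0 < n)%N -> S n%:Z -> S 1.
  have [s Ss s2] := Sq 2%N isT.
  apply: (S1 `|s|%N); last by rewrite abszEsg mulrC; auto.
  by rewrite absz_gt0; apply: contraNneq s2 => ->.
elim/ltn_ind: n => n IH n_gt0 Sn.
have [n1 | n_neq1] := eqVneq n 1%N; first by rewrite n1 in Sn.
have q_prime : prime (pdiv n) by apply: pdiv_prime; lia.
have [s Ss q_s] := Sq _ q_prime.
have n_s_dvd : (gcdn n `|s| %| n)%N by apply: dvdn_gcdl.
apply: (IH (gcdn n `|s|)); [|by rewrite gcdn_gt0 n_gt0|exact: (Sgcd _ _ Sn Ss)].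
rewrite ltn_neqAle (dvdn_leq n_gt0 n_s_dvd) andbT; apply: contraNneq q_s => eq_n.
by rewrite dvdzE /= (dvdn_trans (pdiv_dvd n)) // -{1}eq_n dvdn_gcdr.
Qed.

Lemma big_gcdz_eq1_ndvd m (l : nat -> int) q :
  \big[gcdz/0]_(i < m) l i = 1 -> prime q -> exists2 i, (i < m)%N & ~~ (q%:Z %| l i)%Z.
Proof.
move=> l_gcd q_prime.
have /existsP[i q_li] : [exists i : 'I_m, ~~ (q%:Z %| l i)%Z]; last by exists i.
apply: contraLR (prime_gt1 q_prime) => /existsPn no_i.
have : (q%:Z %| \big[gcdz/0]_(i < m) l i)%Z.
  apply: (big_ind (fun x => q%:Z %| x)%Z) => [|x y qx qy|i _]; first exact: dvdz0.
    by rewrite dvdz_gcd qx qy.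
  exact/negPn/no_i.
by rewrite l_gcd dvdzE /= dvdn1 => /eqP ->.
Qed.

Section IntPolynomial.

Local Notation pZtoQ := (map_poly (intr : int -> rat)).

Lemma size_monic_subXn (R : nzRingType) (p : {poly R}) : p \is monic ->
  (size (p - 'X^((size p).-1))%R <= (size p).-1)%N.
Proof.
move=> p_monic; apply/leq_sizeP => i le_i; rewrite coefB coefXn.
case: (ltngtP i (size p).-1) => [|lt_i|->]; first by rewrite ltnNge le_i.
  by rewrite nth_default ?subrr //; move: lt_i; case: (size p).
by rewrite -lead_coefE (monicP p_monic) subrr.
Qed.

Lemma poly_eqX_drop1 (R : nzRingType) (p : {poly R}) : p`_0 = 0 -> p = 'X * drop_poly 1 p.
Proof.
move=> p0; rewrite -[p in LHS](poly_take_drop 1) commr_polyX.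
suff -> : take_poly 1 p = 0 by rewrite add0r.
by apply/polyP => -[|i]; rewrite coef_take_poly coef0.
Qed.

Lemma monicXnB (R : nzRingType) n (r : {poly R}) : (size r <= n)%N -> 'X^n - r \is monic.
Proof. by move=> le_rn; rewrite monicE lead_coefDl ?lead_coefXn // size_polyN size_polyXn ltnS. Qed.

Lemma scale_eq_monic_mod q (L : {poly int}) : prime q ->
    L \isn't a polyOver (dvdz q) ->
  exists u P Q, [/\ P \is monic, (size P <= size L)%N & u *: L = P + q%:Z *: Q].
Proof.
move=> q_prime L_ndvd.
have ex_i : exists i, ~~ (q%:Z %| L`_i)%Z.
  by move: L_ndvd; rewrite -has_predC => /(has_nthP 0)[i _ q_Li]; exists i.
have bound i : ~~ (q%:Z %| L`_i)%Z -> (i < size L)%N.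
  by apply: contraR; rewrite -leqNgt => /(nth_default 0) ->; rewrite dvdz0.
have [e q_Le e_max] := ex_maxnP ex_i (fun i q_Li => ltnW (bound i q_Li)).
(* [e] is the last index with [q] not dividing [L`_e], and [u] inverts [L`_e] modulo [q]. *)
have [u [v uv1]] := Bezoutz L`_e q%:Z.
have /eqP gcd1 : coprime q `|L`_e| by rewrite prime_coprime.
rewrite /gcdz gcdnC gcd1 in uv1.
pose P := 'X^e + take_poly e (u *: L).
have size_P : size P = e.+1.
  by rewrite size_polyDl size_polyXn // ltnS size_take_poly.
have P_monic : P \is monic.
  by rewrite monicE lead_coefDl ?lead_coefXn // size_polyXn ltnS size_take_poly.
have P_mod : u *: L - P \is a polyOver (dvdz q%:Z).
  apply/polyOverP => i; rewrite !(coefB, coefD, coefZ, coefXn, coef_take_poly).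
  case: (ltngtP i e) => [lt_ie|lt_ei|->].
  - by rewrite add0r subrr rpred0.
  - rewrite add0r subr0 [_ \in _]dvdz_mull //; apply: contraT => q_Li.
    by move: (e_max i q_Li); rewrite leqNgt lt_ei.
  - by rewrite addr0 /= -[1]uv1 opprD addrA subrr add0r rpredN [_ \in _]dvdz_mull.
exists u, P, (map_poly (divz^~ q%:Z) (u *: L - P)); split => //.
  by rewrite size_P bound.
by rewrite map_poly_divzK // addrC subrK.
Qed.

Lemma monic_int_divisor (r : {poly rat}) (f : {poly int}) :
  f \is monic -> r %| pZtoQ f -> exists2 g : {poly int}, g \is monic & r %= pZtoQ g.
Proof.
move=> f_monic /dvdpP_rat_int [p [c c_neq0 ->] [s f_ps]].
pose lp := lead_coef p.
have lp_unit : lp \is a GRing.unit.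
  by apply/unitrPr; exists (lead_coef s); rewrite -lead_coefM -f_ps (monicP f_monic).
exists (lp *: p); first by rewrite monicE lead_coefZ mulrV.
apply: eqp_trans (eqp_scale _ c_neq0) _; rewrite map_polyZ /= eqp_sym eqp_scale //.
by rewrite intr_eq0; apply: contraTneq lp_unit => ->; rewrite unitr0.
Qed.

Lemma int_bezout_scaled (p q g : {poly int}) :
    pZtoQ g %= gcdp (pZtoQ p) (pZtoQ q) ->
  exists N u v, N != 0 /\ N *: g = u * p + v * q.
Proof.
move=> g_gcd; have [[u1 u2] /= bez] := Bezoutp (pZtoQ p) (pZtoQ q).
have /eqpP[[c1 c2] /= /andP[c1_neq0 c2_neq0] e_g] : pZtoQ g %= u1 * pZtoQ p + u2 * pZtoQ q.
  by rewrite (eqp_trans g_gcd) // eqp_sym.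
have [U1 [a1 a1_neq0 e_U1]] := rat_poly_scale (c2 / c1 *: u1).
have [U2 [a2 a2_neq0 e_U2]] := rat_poly_scale (c2 / c1 *: u2).
exists (a1 * a2), (a2 *: U1), (a1 *: U2); split; first exact: mulf_neq0.
apply: (map_inj_poly (f := intr : int -> rat) intr_inj (rmorph0 _)).
have e_gQ : pZtoQ g = (c2 / c1 *: u1) * pZtoQ p + (c2 / c1 *: u2) * pZtoQ q.
  by rewrite -!scalerAl -scalerDr mulrC -scalerA -e_g scalerK.
have a1Q : (a1%:~R : rat) != 0 by rewrite intr_eq0.
have a2Q : (a2%:~R : rat) != 0 by rewrite intr_eq0.
rewrite map_polyZ e_gQ e_U1 e_U2 rmorphD !rmorphM /= !map_polyZ /=.
by rewrite -!scalerAl !scalerDr !scalerA; congr (_ *: _ + _ *: _); field.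
Qed.

Lemma monic_int_gcd (p f : {poly int}) : p != 0 -> f \is monic ->
  exists g N u v, [/\ g \is monic, (size g <= size p)%N, N != 0 & N *: g = u * p + v * f].
Proof.
move=> p_neq0 f_monic.
have [g g_monic gcd_g] := monic_int_divisor f_monic (dvdp_gcdr (pZtoQ p) _).
have g_gcd : pZtoQ g %= gcdp (pZtoQ p) (pZtoQ f) by rewrite eqp_sym.
have [N [u [v [N_neq0 e_g]]]] := int_bezout_scaled g_gcd.
exists g, N, u, v; split => //.
rewrite -(size_rat_int_poly g) (eqp_size g_gcd) -(size_rat_int_poly p).
by apply: dvdp_leq (dvdp_gcdl _ _); rewrite -size_poly_eq0 size_rat_int_poly size_poly_eq0.
Qed.

Lemma rev_poly_not_polyOver_dvdz m (l : nat -> int) q :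
    \big[gcdz/0]_(i < m) l i = 1 -> prime q ->
  \poly_(i < m) l (m.-1 - i)%N \isn't a polyOver (dvdz q).
Proof.
move=> l_gcd q_prime; have [i lt_im q_li] := big_gcdz_eq1_ndvd l_gcd q_prime.
apply: contra q_li => /polyOverP/(_ (m.-1 - i)%N); rewrite coef_poly.
by have [-> ->] : (m.-1 - i < m /\ m.-1 - (m.-1 - i) = i)%N by lia.
Qed.

End IntPolynomial.

Section ShiftedEvaluation.

Variables (K : zmodType) (mul : K -> K -> K).
Hypothesis mulDr : right_distributive mul +%R.
Variable a : K.

Lemma mulx0 x : mul x 0 = 0.
Proof. by apply: (addrI (mul x 0)); rewrite -mulDr !addr0. Qed.

Lemma mulxMz x y z : mul x (y *~ z) = mul x y *~ z.
Proof.
have mulxMn n : mul x (y *+ n) = mul x y *+ n.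
  by elim: n => [|n IH]; rewrite ?mulr0n ?mulx0 // !mulrS mulDr IH.
have mulxN w : mul x (- w) = - mul x w.
  by apply: (addrI (mul x w)); rewrite -mulDr !subrr mulx0.
case: z => n; first by rewrite -!pmulrn mulxMn.
by rewrite NegzE !mulrNz mulxN -!pmulrn mulxMn.
Qed.

Lemma peval0E (p : {poly int}) n : (size p <= n)%N ->
  peval0 mul p a = \sum_(1 <= i < n) apow mul a i *~ p`_i.
Proof.
move=> le_pn; rewrite /peval0; have [p_gt0 | p_le0] := ltnP 0 (size p).
  rewrite (big_cat_nat p_gt0 le_pn) /= [X in _ = _ + X]big_nat_cond.
  rewrite [X in _ = _ + X]big1 ?addr0 // => i /andP[/andP[le_pi _] _].
  by rewrite nth_default ?mulr0z.
rewrite big_geq ?(leq_trans p_le0) //; apply/esym/big1_seq => i _.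
by rewrite nth_default ?mulr0z // (leq_trans p_le0).
Qed.

(* [evalX p] stands for [a p(a)], so that the constant coefficient of [p] counts. *)
Definition evalX (p : {poly int}) : K := peval0 mul ('X * p) a.

Lemma evalXE (p : {poly int}) n : (size p <= n)%N ->
  evalX p = \sum_(i < n) apow mul a i.+1 *~ p`_i.
Proof.
move=> le_pn; rewrite /evalX (peval0E (n := n.+1)); last first.
  by rewrite (leq_trans (size_polyMleq _ _)) // size_polyX.
by rewrite big_add1 /= big_mkord; apply: eq_bigr => i _; rewrite coefXM.
Qed.

Lemma evalX0 : evalX 0 = 0.
Proof. by rewrite (evalXE (n := 0)) ?big_ord0 ?size_poly0. Qed.

Lemma evalXD p q : evalX (p + q) = evalX p + evalX q.
Proof.
pose n := maxn (size p) (size q).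
rewrite !(evalXE (n := n)) ?leq_maxl ?leq_maxr ?size_polyD // -big_split /=.
by apply: eq_bigr => i _; rewrite coefD mulrzDr.
Qed.

Lemma evalXZ c p : evalX (c *: p) = evalX p *~ c.
Proof.
rewrite !(evalXE (n := size p)) ?size_scale_leq // mulrz_suml.
by apply: eq_bigr => i _; rewrite coefZ mulrC mulrzA.
Qed.

Lemma evalXN p : evalX (- p) = - evalX p.
Proof. by rewrite -scaleN1r evalXZ mulrN1z. Qed.

Lemma evalXB p q : evalX (p - q) = evalX p - evalX q.
Proof. by rewrite evalXD evalXN. Qed.

Lemma evalXMX p : evalX ('X * p) = mul a (evalX p).
Proof.
rewrite (evalXE (n := (size p).+1)); last first.
  by rewrite (leq_trans (size_polyMleq _ _)) // size_polyX.
rewrite (evalXE (n := size p)) // big_ord_recl coefXM mulr0z add0r.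
rewrite (big_morph (mul a) (mulDr a) (mulx0 a)).
by apply: eq_bigr => i _; rewrite coefXM mulxMz.
Qed.

Lemma evalXM_eq0 q p : evalX p = 0 -> evalX (q * p) = 0.
Proof.
elim/poly_ind: q => [|q c IH] p0; first by rewrite mul0r evalX0.
rewrite mulrDl mul_polyC evalXD evalXZ p0 mul0rz addr0.
by rewrite commr_polyX -mulrA evalXMX IH // mulx0.
Qed.

Lemma evalXXn j : evalX 'X^j = apow mul a j.+1.
Proof.
rewrite (evalXE (n := j.+1)) ?size_polyXn // big_ord_recr /= coefXn eqxx.
by rewrite big1 ?add0r // => i _; rewrite coefXn ltn_eqF ?mulr0z.
Qed.

Lemma evalX_rev_poly m (l : nat -> int) :
  evalX (\poly_(i < m) l (m.-1 - i)%N) = \sum_(i < m) apow mul a (m - i) *~ l i.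
Proof.
rewrite (evalXE (n := m)) ?size_poly // [RHS](reindex_inj rev_ord_inj) /=.
apply: eq_bigr => i _; rewrite coef_poly ltn_ord.
by have [-> ->] : (m - (m - i.+1) = i.+1 /\ m.-1 - i = m - i.+1)%N by have := ltn_ord i; lia.
Qed.

Variable n : nat.

Definition low_span (y : K) := exists2 r : {poly int}, (size r <= n)%N & y = evalX r.

Lemma low_span_evalX (p : {poly int}) : (size p <= n)%N -> low_span (evalX p).
Proof. by exists p. Qed.

Lemma low_span0 : low_span 0.
Proof. by exists 0; rewrite ?size_poly0 ?evalX0. Qed.

Lemma low_spanD x y : low_span x -> low_span y -> low_span (x + y).
Proof.
move=> [r le_rn ->] [s le_sn ->]; rewrite -evalXD.
by apply: low_span_evalX; rewrite (leq_trans (size_polyD _ _)) // geq_max le_rn.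
Qed.

Lemma low_spanMz x z : low_span x -> low_span (x *~ z).
Proof.
move=> [r le_rn ->]; rewrite -evalXZ.
by apply: low_span_evalX; rewrite (leq_trans (size_scale_leq _ _)).
Qed.

Lemma low_spanB x y : low_span x -> low_span y -> low_span (x - y).
Proof. by move=> lx ly; rewrite -mulrN1z; apply/low_spanD/low_spanMz. Qed.

Lemma low_span_scale_poly (M : int) (p : {poly int}) k : (size p <= k)%N ->
    (forall i, (i < k)%N -> low_span (evalX (M *: 'X^i))) ->
  low_span (evalX (M *: p)).
Proof.
move=> le_pk low_i; rewrite evalXZ (evalXE (n := k)) // mulrz_suml.
apply: (big_ind low_span) => [|x y|i _]; [exact: low_span0 | exact: low_spanD |].
by have := low_spanMz p`_i (low_i i (ltn_ord i)); rewrite evalXZ evalXXn -!mulrzA mulrC.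
Qed.

Lemma low_span_reduce (M : int) (P : {poly int}) :
    P \is monic -> (size P <= n.+1)%N ->
    (forall k, low_span (evalX (M *: ('X^k * P)))) ->
  forall j, low_span (evalX (M *: 'X^j)).
Proof.
move=> P_monic le_Pn low_P; elim/ltn_ind => j IH.
have [lt_jn | le_nj] := ltnP j n.
  by apply: low_span_evalX; rewrite (leq_trans (size_scale_leq _ _)) ?size_polyXn.
pose s := (size P).-1; have le_sj : (s <= j)%N by rewrite /s; lia.
have -> : M *: 'X^j = M *: ('X^(j - s) * P) - M *: ('X^(j - s) * (P - 'X^s)).
  by rewrite -scalerBr -mulrBr opprB addrC subrK -exprD subnK.
rewrite evalXB; apply: low_spanB => //; apply: (low_span_scale_poly (k := j)) => //.
rewrite (leq_trans (size_polyMleq _ _)) // size_polyXn addSn /=.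
by rewrite -[leqRHS](subnK le_sj) leq_add2l size_monic_subXn.
Qed.

Lemma low_span_monic_kernel (N : int) (g : {poly int}) :
    g \is monic -> (size g <= n.+1)%N -> evalX (N *: g) = 0 ->
  forall j, low_span (evalX (N *: 'X^j)).
Proof.
move=> g_monic le_gn Ng0; apply: (low_span_reduce g_monic le_gn) => k.
by rewrite scalerAr evalXM_eq0 //; apply: low_span0.
Qed.

Lemma low_span_descent q (L : {poly int}) (M : int) :
    prime q -> L \isn't a polyOver (dvdz q) -> (size L <= n.+1)%N -> evalX L = 0 ->
    (forall j, low_span (evalX ((q%:Z * M) *: 'X^j))) ->
  forall j, low_span (evalX (M *: 'X^j)).
Proof.
move=> q_prime L_ndvd le_Ln L0 low_qM.
have [u [P [Q [P_monic le_PL uL]]]] := scale_eq_monic_mod q_prime L_ndvd.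
apply: (low_span_reduce P_monic (leq_trans le_PL le_Ln)) => k.
have -> : M *: ('X^k * P) = (M * u) *: ('X^k * L) - (q%:Z * M) *: ('X^k * Q).
  by rewrite -[P](addrK (q%:Z *: Q)) -uL -!mul_polyC !polyCM; ring.
rewrite evalXB evalXZ evalXM_eq0 // mul0rz; apply/low_spanB; first exact: low_span0.
by apply: (low_span_scale_poly (k := size ('X^k * Q))).
Qed.

Lemma low_span_coprime q (L : {poly int}) (N : int) :
    prime q -> L \isn't a polyOver (dvdz q) -> (size L <= n.+1)%N -> evalX L = 0 ->
    N != 0 -> (forall j, low_span (evalX (N *: 'X^j))) ->
  exists2 s : int, ~~ (q%:Z %| s)%Z & forall j, low_span (evalX (s *: 'X^j)).
Proof.
move=> q_prime L_ndvd le_Ln L0 N_neq0 low_N.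
have descent k M : (forall j, low_span (evalX ((q%:Z ^+ k * M) *: 'X^j))) ->
    forall j, low_span (evalX (M *: 'X^j)).
  elim: k M => [|k IH] M low_k; first by move=> j; rewrite -[M]mul1r.
  apply: (low_span_descent q_prime L_ndvd le_Ln L0); apply: IH => j.
  by rewrite mulrA -exprSr.
have N_gt0 : (0 < `|N|)%N by rewrite absz_gt0.
have [N' q_N' eN] := pfactor_coprime q_prime N_gt0.
exists N'%:Z; first by rewrite dvdzE /= -prime_coprime.
apply: (descent (logn q `|N|)) => j.
have -> : q%:Z ^+ logn q `|N| * N'%:Z = sgz N * N.
  by rewrite -abszEsg [in RHS]eN PoszM mulrC -[Posz (q ^ _)]natz natrX natz.
by rewrite -scalerA evalXZ; apply: low_spanMz.
Qed.

Lemma low_span_Xn (L g : {poly int}) (N : int) :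
    (forall q, prime q -> L \isn't a polyOver (dvdz q)) ->
    (size L <= n.+1)%N -> evalX L = 0 ->
    g \is monic -> (size g <= n.+1)%N -> N != 0 -> evalX (N *: g) = 0 ->
  low_span (evalX 'X^n).
Proof.
move=> L_prim le_Ln L0 g_monic le_gn N_neq0 Ng0.
rewrite -[X in evalX X]scale1r.
apply: (int_ideal_unit (S := fun s => low_span (evalX (s *: 'X^n)))).
- by move=> x y lx ly; rewrite scalerDl evalXD; apply: low_spanD.
- by move=> x z lx; rewrite mulrC -scalerA evalXZ; apply: low_spanMz.
- move=> q q_prime.
  have [s q_s low_s] := low_span_coprime q_prime (L_prim q q_prime) le_Ln L0 N_neq0
    (low_span_monic_kernel g_monic le_gn Ng0).
  by exists s.
Qed.

End ShiftedEvaluation.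

Theorem lemma9 (K : zmodType) (mul : K -> K -> K)
  (mulA : associative mul)
  (mulDl : left_distributive mul +%R)
  (mulDr : right_distributive mul +%R)
  (a : K) (m : nat) (l : nat -> int)
  (m_gt0 : (0 < m)%N)
  (l0_gt0 : 0 < l 0%N)
  (l_gcd : \big[gcdz/0]_(i < m) l i = 1)
  (l_rel : \sum_(i < m) (apow mul a (m - i) *~ l i) = 0)
  (d : int) (f : {poly int})
  (d_gt1 : 1 < d)
  (f_monic : f \is monic)
  (f0 : f`_0 = 0)
  (df : peval0 mul f a *~ d = 0) :
  exists phi : {poly int},
    [/\ phi \is monic, phi`_0 = 0, (size phi <= m.+1)%N & peval0 mul phi a = 0].
Proof.
pose n := m.-1; have m_eq : m = n.+1 by rewrite prednK.
pose L := \poly_(i < m) l (n - i)%N.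
have le_Ln : (size L <= n.+1)%N by rewrite -m_eq size_poly.
have L0 : evalX mul a L = 0 by rewrite evalX_rev_poly.
have L_prim q : prime q -> L \isn't a polyOver (dvdz q) := rev_poly_not_polyOver_dvdz l_gcd.
have L_neq0 : L != 0 by apply: contraNneq (L_prim 2%N isT) => ->; apply: rpred0.
pose f1 := drop_poly 1 f; have ef : f = 'X * f1 := poly_eqX_drop1 f0.
have f1_monic : f1 \is monic by rewrite -(monicMl _ (monicX _)) -ef.
have [g [N [u [v [g_monic le_gL N_neq0 eg]]]]] := monic_int_gcd L_neq0 f1_monic.
have d_neq0 : d != 0 by apply: contraTneq d_gt1 => ->.
have Ng0 : evalX mul a ((N * d) *: g) = 0.
  rewrite mulrC -scalerA eg scalerDr evalXD !scalerAr !(evalXM_eq0 mulDr) ?addr0 //.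
    by rewrite evalXZ /evalX -ef df.
  by rewrite evalXZ L0 mul0rz.
have [r le_rn er] := low_span_Xn mulDr L_prim le_Ln L0 g_monic (leq_trans le_gL le_Ln)
  (mulf_neq0 N_neq0 d_neq0) Ng0.
exists ('X * ('X^n - r)); have Xr_monic := monicXnB le_rn; split.
- by rewrite monicMl ?monicX.
- by rewrite coefXM.
- rewrite size_monicM ?monicX ?monic_neq0 // size_polyX size_polyDl size_polyXn ?m_eq //.
  by rewrite size_polyN ltnS.
- by rewrite -/(evalX mul a _) evalXB er subrr.
Qed.
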